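(* Let $g \ge 9$ be an integer and let $\mathcal{S}_{4,g}$ be the set of numerical semigroups of multiplicity $4$ and genus $g$. Then $\#\mathcal{S}_{4,g} = -g + \frac{5}{2}\lfloor \frac{g}{4}\rfloor + \lfloor \frac{g}{2}\rfloor + \frac12\lfloor \frac{g+5}{6}\rfloor + g\lfloor \frac{g+5}{6}\rfloor - \lfloor \frac{g+5}{6}\rfloor\lfloor \frac{g}{2}\rfloor - \frac32\lfloor \frac{g+5}{6}\rfloor^2 - g\lfloor \frac{g}{4}\rfloor + \frac32\lfloor \frac{g}{4}\rfloor^2 + \lfloor \frac{g}{4}\rfloor\lfloor \frac{g}{2}\rfloor - \frac12\lfloor \frac{g+2}{6}\rfloor + \lfloor \frac{g+2}{6}\rfloor\lfloor \frac{g}{2}\rfloor - \frac32\lfloor \frac{g+2}{6}\rfloor^2 + \frac12\lfloor \frac{g+2}{4}\rfloor + \frac32\lfloor \frac{g+2}{4}\rfloor^2 - \lfloor \frac{g+2}{4}\rfloor\lfloor \frac{g}{2}\rfloor + \lfloor \frac{g+1}{2}\rfloor\lfloor \frac{g}{2}\rfloor - \lfloor \frac{g+1}{2}\rfloor\lceil \frac{2g-3}{8}\rceil + \lfloor \frac{g+1}{2}\rfloor - \lceil \frac{2g-7}{8}\rceil\lfloor \frac{g}{2}\rfloor + \lceil \frac{2g-7}{8}\rceil\lceil \frac{2g-3}{8}\rceil - \lceil \frac{2g-7}{8}\rceil$.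
   Context: A numerical semigroup is a subset $S \subseteq \mathbb{N}$ containing $0$, closed under addition, with $\mathbb{N}\setminus S$ finite. Its multiplicity is $\min(S\setminus\{0\})$ and its genus is $\#(\mathbb{N}\setminus S)$. *)

From mathcomp Require Import all_boot all_order all_algebra.
From Stdlib Require List.
Set Implicit Arguments. Unset Strict Implicit. Unset Printing Implicit Defensive.
Import Order.TTheory GRing.Theory Num.Theory.

Definition numerical_semigroup (S : pred nat) : Prop :=
  [/\ S 0, (forall a b, S a -> S b -> S (a + b)) &
      exists N, forall x, N <= x -> S x].

Definition has_multiplicity (S : pred nat) (m : nat) : Prop :=
  [/\ 0 < m, S m & forall x, 0 < x < m -> ~~ S x].

(* g = #(ℕ \ S): counted below any bound N beyond which all integers lie in S
   (the count does not depend on the chosen bound). *)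
Definition has_genus (S : pred nat) (g : nat) : Prop :=
  exists N, (forall x, N <= x -> S x) /\ count (predC S) (iota 0 N) = g.

Definition in_S (m g : nat) (S : pred nat) : Prop :=
  [/\ numerical_semigroup S, has_multiplicity S m & has_genus S g].

Definition card_is (X : pred nat -> Prop) (n : nat) : Prop :=
  exists L : list (pred nat),
    [/\ List.NoDup L, (forall S, List.In S L <-> X S) & List.length L = n].

Local Open Scope ring_scope.
Definition flr (x : rat) : rat := (Num.floor x)%:~R.
Definition cil (x : rat) : rat := (Num.ceil x)%:~R.

From mathcomp Require Import all_boot all_order all_algebra.
From mathcomp Require Import zify ring.
From Stdlib Require Import FunctionalExtensionality.
Import GRing.Theory Num.Theory.

(* A numerical semigroup S containing m is determined by its Kunz coordinates:
   k r is the least q with q * m + r in S, so that S = {n | k (n mod m) <= n / m}.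
   Closure of S under addition is exactly the system of inequalities
   k (r + s mod m) <= k r + k s + [m <= r + s], multiplicity m means k r > 0 for
   0 < r < m, and the genus is the sum of the k r.  For m = 4 the semigroups of
   genus g are thus the lattice points (x, y, z) of a polytope with x + y + z = g.
   For fixed y the admissible x form an interval, and summing the interval lengths
   gives 2 n = t (t + 3) + 2 (b - t) (g - b - t) with t = g / 3 and b = g / 2.
   Finally, this and the stated expression differ by a quasi-polynomial of period
   24 and degree at most 2 in each residue class, whose second difference in steps
   of 24 vanishes identically; so it suffices that they agree for g < 48. *)

Lemma count_iota_sum (P : pred nat) n : count P (iota 0 n) = \sum_(i < n) P i.
Proof.
elim: n => [|n IH]; first by rewrite big_ord0.
have -> : iota 0 n.+1 = iota 0 n ++ [:: n] by rewrite -addn1 iotaD.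
by rewrite count_cat big_ord_recr IH /= addn0.
Qed.

Lemma count_iota_itv lo hi n :
  count (fun x => lo <= x <= hi) (iota 0 n) = minn hi.+1 n - lo.
Proof.
elim: n => [|n IH]; first by rewrite minn0.
have -> : iota 0 n.+1 = iota 0 n ++ [:: n] by rewrite -addn1 iotaD.
by rewrite count_cat IH /=; case: (leqP lo n); case: (leqP n hi) => /= *; lia.
Qed.

Lemma count_allpairs (S T R : Type) (f : S -> T -> R) (P : pred R) s t :
  count P [seq f x y | x <- s, y <- t] = \sum_(x <- s) count (fun y => P (f x y)) t.
Proof.
by elim: s => [|x s IH]; rewrite ?big_nil ?big_cons //= count_cat count_map IH.
Qed.

Lemma In_mem (T : eqType) (s : seq T) x : List.In x s <-> x \in s.
Proof.
elim: s => //= y s IH; rewrite inE; split.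
- by case=> [->|/IH ->]; rewrite ?eqxx ?orbT.
- by case/orP => [/eqP ->|/IH]; [left|right].
Qed.

Lemma uniq_NoDup (T : eqType) (s : seq T) : uniq s -> List.NoDup s.
Proof.
elim: s => [|x s IH] /=; first by constructor.
by case/andP => x_notin /IH s_nodup; constructor => // /In_mem; apply/negP.
Qed.

Lemma length_size (T : Type) (s : seq T) : List.length s = size s.
Proof. by elim: s => //= x s ->. Qed.

Section KunzCoordinates.

Variable m : nat.
Hypothesis m_gt0 : 0 < m.

Definition kunz_set (k : nat -> nat) : pred nat := fun n => k (n %% m) <= n %/ m.

Definition kunz_ineqs (k : nat -> nat) : Prop :=
  forall r s, r < m -> s < m -> k ((r + s) %% m) <= k r + k s + (m <= r + s).

Lemma kunz_setE k q r : r < m -> kunz_set k (q * m + r) = (k r <= q).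
Proof.
by move=> r_lt; rewrite /kunz_set modnMDl divnMDl // modn_small // divn_small // addn0.
Qed.

Lemma kunz_set_addr k a b :
  kunz_ineqs k -> kunz_set k a -> kunz_set k b -> kunz_set k (a + b).
Proof.
move=> kI ka kb; rewrite /kunz_set -modnDm divnD //.
apply: leq_trans (kI _ _ (ltn_pmod a m_gt0) (ltn_pmod b m_gt0)) _.
by rewrite leq_add2r leq_add.
Qed.

Lemma kunz_ineqs_addr k :
  (forall a b, kunz_set k a -> kunz_set k b -> kunz_set k (a + b)) -> kunz_ineqs k.
Proof.
move=> kD r s r_lt s_lt.
have := kD (k r * m + r) (k s * m + s); rewrite !kunz_setE // => /(_ (leqnn _) (leqnn _)).
rewrite addnACA -mulnDl /kunz_set modnMDl divnMDl // divnD //.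
by rewrite (divn_small r_lt) (divn_small s_lt) (modn_small r_lt) (modn_small s_lt).
Qed.

Lemma count_kunz_set_gaps k M :
  count (predC (kunz_set k)) (iota 0 (M * m)) = \sum_(r < m) minn (k r) M.
Proof.
elim: M => [|M IH]; first by rewrite big1 // => r _; rewrite minn0.
have block : count (predC (kunz_set k)) (iota (M * m) m) = \sum_(r < m) (M < k r).
  rewrite -[M * m]addn0 iotaDl count_map -(count_iota_sum (fun r => M < k r)).
  apply: eq_in_count => r.
  by rewrite mem_iota /= => r_lt; rewrite kunz_setE // ltnNge.
rewrite mulSn addnC iotaD count_cat IH add0n block -big_split /=.
by apply: eq_bigr => r _; case: ltnP => /= ?; lia.
Qed.

Lemma genus_kunz_set k N : (forall n, N <= n -> kunz_set k n) ->
  count (predC (kunz_set k)) (iota 0 N) = \sum_(r < m) k r.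
Proof.
move=> kN; have N_le : N <= N * m := leq_pmulr N m_gt0.
have k_le r : r < m -> k r <= N.
  by move=> r_lt; rewrite -(kunz_setE k N _ r_lt) kN // (leq_trans N_le) ?leq_addr.
have := count_kunz_set_gaps k N.
rewrite -(subnKC N_le) iotaD count_cat add0n.
have -> : count (predC (kunz_set k)) (iota N (N * m - N)) = 0.
  apply/eqP; rewrite -leqn0 leqNgt -has_count; apply/hasPn => n.
  by rewrite mem_iota /= => /andP [/kN ->].
by rewrite addn0 => ->; apply: eq_bigr => r _; apply/minn_idPl/k_le.
Qed.

Lemma kunz_set_inj k1 k2 :
  kunz_set k1 =1 kunz_set k2 -> forall r, r < m -> k1 r = k2 r.
Proof.
move=> E r r_lt.
have le12 := E (k2 r * m + r); have le21 := E (k1 r * m + r).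
rewrite !kunz_setE // in le12 le21.
by apply/eqP; rewrite eqn_leq le12 -le21 !leqnn.
Qed.

Lemma eq_kunz_set k1 k2 :
  (forall r, r < m -> k1 r = k2 r) -> kunz_set k1 = kunz_set k2.
Proof.
move=> E; apply: functional_extensionality => n.
by rewrite /kunz_set E // ltn_pmod.
Qed.

Lemma kunz_set_in_S k :
  k 0 = 0 -> (forall r, 0 < r < m -> 0 < k r) -> kunz_ineqs k ->
  in_S m (\sum_(r < m) k r) (kunz_set k).
Proof.
move=> k0 k_gt0 kI; set K := \max_(r < m) k r.
have k_le r : r < m -> k r <= K.
  by move=> r_lt; apply: (@leq_bigmax _ (fun i : 'I_m => k i) (Ordinal r_lt)).
have large n : K * m <= n -> kunz_set k n.
  move=> Kn; rewrite /kunz_set (leq_trans (k_le _ (ltn_pmod n m_gt0))) //.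
  by rewrite -(mulnK K m_gt0) leq_div2r.
split.
- split; last by exists (K * m).
  + by rewrite /kunz_set mod0n div0n k0.
  + by move=> a b; apply: kunz_set_addr.
- split=> // [|x /andP [x_gt0 x_lt]].
  + by rewrite /kunz_set modnn divnn m_gt0 k0.
  + by rewrite /kunz_set modn_small // divn_small // -ltnNge k_gt0 ?x_gt0.
- by exists (K * m); split=> //; apply: genus_kunz_set.
Qed.

Lemma in_S_kunz_set g S : in_S m g S ->
  exists k, [/\ S = kunz_set k, k 0 = 0, (forall r, 0 < r < m -> 0 < k r),
                kunz_ineqs k & \sum_(r < m) k r = g].
Proof.
case=> [[S0 SD [N SN]] [_ Sm S_small] [N' [SN' gaps]]].
have S_addm a j : S a -> S (a + j * m).
  by move=> Sa; elim: j => [|j IH]; rewrite ?addn0 // mulSn addnCA SD.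
have ex r : exists q, S (q * m + r).
  by exists N; apply: SN; rewrite (leq_trans (leq_pmulr N m_gt0)) ?leq_addr.
pose k r := ex_minn (ex r).
have k_spec r : S (k r * m + r) /\ forall q, S (q * m + r) -> k r <= q.
  by rewrite /k; case: ex_minnP.
have SE : S =1 kunz_set k.
  move=> n; rewrite {1}(divn_eq n m) /kunz_set.
  have [Sk k_min] := k_spec (n %% m).
  apply/idP/idP => [/k_min // | le].
  by rewrite -(subnK le) mulnDl [_ * m + _ * m]addnC addnAC S_addm.
have k0 : k 0 = 0 by apply/eqP; rewrite -leqn0; apply: (k_spec 0).2.
exists k; split=> //.
- exact: functional_extensionality SE.
- move=> r r_range; rewrite lt0n; apply/eqP => kr0.
  by have := S_small r r_range; have := (k_spec r).1; rewrite kr0 => ->.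
- by apply: kunz_ineqs_addr => a b; rewrite -!SE; apply: SD.
- have kN' n : N' <= n -> kunz_set k n by move=> /SN'; rewrite SE.
  by rewrite -gaps -(genus_kunz_set _ _ kN'); apply: eq_count => n; rewrite /= SE.
Qed.

End KunzCoordinates.

Definition kunz4 (t : nat * nat * nat) (r : nat) : nat :=
  let: (x, y, z) := t in match r with 1 => x | 2 => y | 3 => z | _ => 0 end.

Definition kunz4_cone (t : nat * nat * nat) : bool :=
  let: (x, y, z) := t in
  [&& 0 < x, 0 < y, 0 < z, y <= 2 * x, z <= x + y, y <= 2 * z + 1 & x <= y + z + 1].

Lemma kunz4_coneP t :
  reflect ((forall r, 0 < r < 4 -> 0 < kunz4 t r) /\ kunz_ineqs 4 (kunz4 t))
          (kunz4_cone t).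
Proof.
case: t => [[x y] z]; apply: (iffP and4P) => [[x_gt0 y_gt0 z_gt0] | [k_gt0 kI]].
- move=> /and4P [yx zxy yz xyz]; split; first by case=> [|[|[|[|]]]].
  by case=> [|[|[|[|r]]]] // [|[|[|[|s]]]] //= _ _; lia.
- have := kI 1 1; have := kI 1 2; have := kI 3 3; have := kI 2 3.
  move=> /= /(_ isT isT) xyz /(_ isT isT) yz /(_ isT isT) zxy /(_ isT isT) yx.
  split; [exact: (k_gt0 1) | exact: (k_gt0 2) | exact: (k_gt0 3) |].
  by apply/and4P; split; lia.
Qed.

Lemma sum_kunz4 t : \sum_(r < 4) kunz4 t r = t.1.1 + t.1.2 + t.2.
Proof. by case: t => [[x y] z]; rewrite !big_ord_recr big_ord0 /= add0n. Qed.

Definition kunz4_triples (g : nat) : seq (nat * nat * nat) :=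
  [seq t <- [seq (x, y, g - x - y) | y <- iota 0 g.+1, x <- iota 0 g.+1] | kunz4_cone t].

Lemma mem_kunz4_triples g t :
  (t \in kunz4_triples g) = kunz4_cone t && (t.1.1 + t.1.2 + t.2 == g).
Proof.
case: t => [[x y] z]; rewrite mem_filter.
case: (boolP (kunz4_cone _)) => // /and4P [_ _ z_gt0 _].
apply/allpairsP/eqP => [[[y0 x0] [_ _ [-> -> z_eq]]] | g_eq]; first by rewrite /=; lia.
rewrite /= in g_eq; exists (y, x); rewrite !mem_iota /=.
by split; [lia | lia | congr (_, _, _); lia].
Qed.

Lemma uniq_kunz4_triples g : uniq (kunz4_triples g).
Proof.
apply/filter_uniq/allpairs_uniq; try exact: iota_uniq.
by move=> [y1 x1] [y2 x2] _ _ /= [-> ->].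
Qed.

Lemma card_in_S4 g : card_is (in_S 4 g) (size (kunz4_triples g)).
Proof.
exists (List.map (fun t => kunz_set 4 (kunz4 t)) (kunz4_triples g)); split.
- apply: List.NoDup_map_NoDup_ForallPairs; last exact/uniq_NoDup/uniq_kunz4_triples.
  move=> [[x1 y1] z1] [[x2 y2] z2] _ _ E.
  have E_at := @kunz_set_inj 4 isT _ _ (fun n => congr1 (fun P : pred nat => P n) E).
  by move: (E_at 1 isT) (E_at 2 isT) (E_at 3 isT) => /= -> -> ->.
- move=> S; split.
  + case/List.in_map_iff => t [<- /In_mem]; rewrite mem_kunz4_triples.
    case/andP => /kunz4_coneP [k_gt0 kI] /eqP <-; rewrite -sum_kunz4.
    by apply: kunz_set_in_S => //; case: t {k_gt0 kI} => [[]].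
  + case/in_S_kunz_set => // k [-> k0 k_gt0 kI sum_k].
    set t := (k 1, k 2, k 3).
    have Ekt : kunz_set 4 (kunz4 t) = kunz_set 4 k.
      by apply: eq_kunz_set => // [[|[|[|[|r]]]]].
    apply/List.in_map_iff; exists t; split => //; apply/In_mem.
    rewrite mem_kunz4_triples; apply/andP; split.
    * apply/kunz4_coneP; split; first by move=> [|[|[|[|r]]]] // /k_gt0.
      by apply: kunz_ineqs_addr => // a b; rewrite Ekt; apply: kunz_set_addr.
    * by rewrite -sum_k !big_ord_recr big_ord0 /= k0.
- by rewrite List.length_map length_size.
Qed.

Definition kunz4_fiber (g y : nat) : nat :=
  if y == 0 then 0 else minn y.+1 (g.+1 - 2 * y).

Lemma count_kunz4_fiber g y : 4 <= g ->
  count (fun x => kunz4_cone (x, y, g - x - y)) (iota 0 g.+1) = kunz4_fiber g y.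
Proof.
move=> g_ge4; rewrite /kunz4_fiber; case: eqP => [-> | /eqP y_neq0].
  by apply/eqP; rewrite -leqn0 leqNgt -has_count; apply/hasPn => x _; rewrite /= andbF.
have [y_small | y_large] := leqP (3 * y) g.
- rewrite (@eq_in_count _ _ (fun x => g.+1 %/ 2 - y <= x <= g.+1 %/ 2)).
    by rewrite count_iota_itv; lia.
  by move=> x; rewrite mem_iota /= => x_lt; lia.
- rewrite (@eq_in_count _ _ (fun x => y.+1 %/ 2 <= x <= (2 * g + 1 - 3 * y) %/ 2)).
    by rewrite count_iota_itv; lia.
  by move=> x; rewrite mem_iota /= => x_lt; lia.
Qed.

Lemma size_kunz4_triples g : 4 <= g ->
  size (kunz4_triples g) = \sum_(0 <= y < g.+1) kunz4_fiber g y.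
Proof.
move=> g_ge4; rewrite size_filter count_allpairs; apply: eq_bigr => y _.
exact: count_kunz4_fiber.
Qed.

Lemma double_sum_succ n : 2 * \sum_(1 <= y < n.+1) y.+1 = n * (n + 3).
Proof.
elim: n => [|n IH]; first by rewrite big_geq.
by rewrite big_nat_recr //= mulnDr IH; lia.
Qed.

Lemma sum_sub_double c lo n : 2 * (lo + n) <= c + 2 ->
  \sum_(lo <= y < lo + n) (c - 2 * y) = n * (c.+1 - 2 * lo - n).
Proof.
elim: n => [|n IH] bound; first by rewrite addn0 big_geq.
rewrite addnS big_nat_recr ?leq_addr //= IH; last by lia.
nia.
Qed.

Lemma double_sum_kunz4_fiber g :
  2 * \sum_(0 <= y < g.+1) kunz4_fiber g y =
  g %/ 3 * (g %/ 3 + 3) + 2 * ((g %/ 2 - g %/ 3) * (g - g %/ 2 - g %/ 3)).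
Proof.
set t := g %/ 3; set b := g %/ 2.
have t_le_b : t <= b by rewrite /t /b; lia.
have b_le_g : b <= g by rewrite /b; lia.
rewrite (big_cat_nat _ (n := b.+1)) // (big_cat_nat _ (n := t.+1)) //.
rewrite (big_cat_nat _ (n := 1)) // big_nat1.
rewrite [\sum_(b.+1 <= i < g.+1) _]big1_seq => [|y]; last first.
  by rewrite mem_index_iota /kunz4_fiber /b => /andP [? ?]; case: eqP => ?; lia.
rewrite (eq_big_nat _ _ (F2 := fun y => y.+1)) => [|y]; last first.
  by rewrite /kunz4_fiber /t => /andP [? ?]; case: eqP => ?; lia.
rewrite [\sum_(t.+1 <= i < b.+1) _](eq_big_nat _ _ (F2 := fun y => g.+1 - 2 * y))
  => [|y]; last first.
  by rewrite /kunz4_fiber /t /b => /andP [? ?]; case: eqP => ?; lia.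
have -> : b.+1 = t.+1 + (b - t) by lia.
rewrite sum_sub_double; last by rewrite /t /b; lia.
rewrite /kunz4_fiber eqxx /= add0n addn0 mulnDr double_sum_succ; congr (_ + _).
by congr (2 * (_ * _)); lia.
Qed.

Local Open Scope ring_scope.

Lemma second_difference_eq0 (V : zmodType) (p : nat) (u : nat -> V) : (0 < p)%N ->
  (forall n, u (n + p * 2)%N + u n = u (n + p * 1)%N *+ 2) ->
  (forall n, (n < p * 2)%N -> u n = 0) -> forall n, u n = 0.
Proof.
move=> p_gt0 rec base; elim/ltn_ind => n IH.
have [/base // | n_large] := ltnP n (p * 2).
rewrite -(subnK n_large); have := rec (n - p * 2)%N.
rewrite (IH (n - p * 2)%N) ?(IH (n - p * 2 + p * 1)%N) ?addr0 ?mul0rn //; lia.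
Qed.

Definition paper_formula (g : nat) : rat :=
  let G : rat := g%:R in
  let a := flr (G / 4) in
  let b := flr (G / 2) in
  let c := flr ((G + 5) / 6) in
  let d := flr ((G + 2) / 6) in
  let e := flr ((G + 2) / 4) in
  let f := flr ((G + 1) / 2) in
  let h := cil ((2 * G - 3) / 8) in
  let k := cil ((2 * G - 7) / 8) in
  - G + 5/2 * a + b + 1/2 * c + G * c - c * b - 3/2 * c ^+ 2
  - G * a + 3/2 * a ^+ 2 + a * b - 1/2 * d + d * b - 3/2 * d ^+ 2
  + 1/2 * e + 3/2 * e ^+ 2 - e * b + f * b - f * h + f
  - k * b + k * h - k.

Definition closed_count (g : nat) : rat :=
  let G : rat := g%:R in
  let t := flr (G / 3) in
  let b := flr (G / 2) in
  (t * (t + 3) + 2 * ((b - t) * (G - b - t))) / 2.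

Lemma flr_natr_div (n d : nat) : (0 < d)%N -> flr (n%:R / d%:R) = (n %/ d)%:R.
Proof.
move=> d_gt0; rewrite /flr (@floor_def _ _ (n %/ d)%:Z) //.
have d_pos : (0 : rat) < d%:R by rewrite ltr0n.
rewrite intrD !pmulrn -natrD ler_pdivlMr // ltr_pdivrMr // -!natrM ler_nat ltr_nat.
by have := divn_eq n d; have := ltn_pmod n d_gt0; lia.
Qed.

Lemma flr_shift (x y : rat) (n : nat) : y = x + n%:R -> flr y = flr x + n%:R.
Proof.
by move->; rewrite /flr floorDrz ?natr_int // intrD -[n%:R]/((n%:Z)%:~R) intrKfloor.
Qed.

Lemma cil_shift (x y : rat) (n : nat) : y = x + n%:R -> cil y = cil x + n%:R.
Proof.
by move->; rewrite /cil ceilDrz ?natr_int // intrD -[n%:R]/((n%:Z)%:~R) intrKceil.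
Qed.

Definition formula_gap (g : nat) : rat := paper_formula g - closed_count g.

Lemma formula_gap_second_difference (g : nat) :
  formula_gap (g + 24 * 2) + formula_gap g = formula_gap (g + 24 * 1) *+ 2.
Proof.
rewrite /formula_gap /paper_formula /closed_count; set G := g%:R.
have sa k : flr ((g + 24 * k)%:R / 4) = flr (G / 4) + (6 * k)%:R.
  by apply: flr_shift; rewrite natrD !natrM; field.
have sb k : flr ((g + 24 * k)%:R / 2) = flr (G / 2) + (12 * k)%:R.
  by apply: flr_shift; rewrite natrD !natrM; field.
have st k : flr ((g + 24 * k)%:R / 3) = flr (G / 3) + (8 * k)%:R.
  by apply: flr_shift; rewrite natrD !natrM; field.
have sc k : flr (((g + 24 * k)%:R + 5) / 6) = flr ((G + 5) / 6) + (4 * k)%:R.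
  by apply: flr_shift; rewrite natrD !natrM; field.
have sd k : flr (((g + 24 * k)%:R + 2) / 6) = flr ((G + 2) / 6) + (4 * k)%:R.
  by apply: flr_shift; rewrite natrD !natrM; field.
have se k : flr (((g + 24 * k)%:R + 2) / 4) = flr ((G + 2) / 4) + (6 * k)%:R.
  by apply: flr_shift; rewrite natrD !natrM; field.
have sf k : flr (((g + 24 * k)%:R + 1) / 2) = flr ((G + 1) / 2) + (12 * k)%:R.
  by apply: flr_shift; rewrite natrD !natrM; field.
have sh k : cil ((2 * (g + 24 * k)%:R - 3) / 8) = cil ((2 * G - 3) / 8) + (6 * k)%:R.
  by apply: cil_shift; rewrite natrD !natrM; field.
have sk k : cil ((2 * (g + 24 * k)%:R - 7) / 8) = cil ((2 * G - 7) / 8) + (6 * k)%:R.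
  by apply: cil_shift; rewrite natrD !natrM; field.
by rewrite !(sa, sb, st, sc, sd, se, sf, sh, sk) !natrD !natrM; field.
Qed.

Lemma paper_formula_closed_count g : paper_formula g = closed_count g.
Proof.
apply/eqP; rewrite -subr_eq0 -[_ - _]/(formula_gap g); apply/eqP; move: g.
apply: (@second_difference_eq0 _ 24) => // [n | n n_small].
  exact: formula_gap_second_difference.
have small : all (fun n => formula_gap n == 0) (iota 0 48) by vm_compute.
by apply/eqP; move/allP: small; apply; rewrite mem_iota.
Qed.

Lemma natr_closed_count g n :
  (2 * n = g %/ 3 * (g %/ 3 + 3) + 2 * ((g %/ 2 - g %/ 3) * (g - g %/ 2 - g %/ 3)))%N ->
  n%:R = closed_count g.
Proof.
move=> /(congr1 (fun k => k%:R : rat)); rewrite /closed_count !flr_natr_div //.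
rewrite natrM natrD !natrM !natrB ?natrD; try lia.
by move=> E; apply: (mulIf (x := 2)) => //; rewrite mulrC mulfVK // E.
Qed.

Theorem mainTheorem8 (g : nat) (hg : (9 <= g)%N) :
  exists n : nat, card_is (in_S 4 g) n /\
  let G : rat := g%:R in
  let a := flr (G / 4) in
  let b := flr (G / 2) in
  let c := flr ((G + 5) / 6) in
  let d := flr ((G + 2) / 6) in
  let e := flr ((G + 2) / 4) in
  let f := flr ((G + 1) / 2) in
  let h := cil ((2 * G - 3) / 8) in
  let k := cil ((2 * G - 7) / 8) in
  n%:R = - G + 5/2 * a + b + 1/2 * c + G * c - c * b - 3/2 * c ^+ 2
         - G * a + 3/2 * a ^+ 2 + a * b - 1/2 * d + d * b - 3/2 * d ^+ 2
         + 1/2 * e + 3/2 * e ^+ 2 - e * b + f * b - f * h + f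
         - k * b + k * h - k.
Proof.
have g_ge4 : (4 <= g)%N by apply: leq_trans hg.
exists (size (kunz4_triples g)); split; first exact: card_in_S4.
change ((size (kunz4_triples g))%:R = paper_formula g).
rewrite paper_formula_closed_count; apply: natr_closed_count.
by rewrite size_kunz4_triples // double_sum_kunz4_fiber.
Qed.
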